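(* Let $P$ be an irreducible aperiodic row-stochastic $n\times n$ matrix with centrality vector $\pi$. Then for every $z\in[0,1]^n$ the limit $\lim_{t\to\infty}W(z)^t=H(z)$ exists, where $H(z)$ is a row-stochastic matrix such that: (i) if $\mathcal S(z)=\emptyset$, then $H(z)=\mathbf{1}p(z)'$, where $$p(z)=\frac1{\gamma(z)}(I-[z])^{-1}\pi,\qquad \gamma(z)=\sum_{i\in\mathcal V}\frac{\pi_i}{1-z_i};$$ (ii) if $\mathcal S(z)\ne\emptyset$, then $H(z)$ is the unique solution of the linear system $$H_{ij}(z)=\sum_{k\in\mathcal V}P_{ik}H_{kj}(z)\quad\forall i\notin\mathcal S(z),\ j\in\mathcal V;\qquad H_{ij}(z)=\delta^i_j\quad\forall i\in\mathcal S(z),\ j\in\mathcal V,$$ where $\delta^i_j=1$ if $i=j$ and $0$ otherwise.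
   Context: $\mathcal V=\{1,\dots,n\}$. A row-stochastic matrix is a nonnegative square matrix with all row sums equal to $1$. $P$ is irreducible if the graph on $\mathcal V$ with edge $(i,j)$ iff $P_{ij}>0$ is strongly connected, and aperiodic if the gcd of the lengths of the cycles of this graph is $1$. The centrality vector $\pi$ is the unique probability vector with $P'\pi=\pi$ (it satisfies $\pi>0$). For $z\in[0,1]^n$, $[z]$ is the diagonal matrix with diagonal $z$, $W(z)=(I-[z])P+[z]$, and $\mathcal S(z)=\{i\in\mathcal V: z_i=1\}$. *)

From HB Require Import structures.
From mathcomp Require Import all_boot all_order all_algebra.
From mathcomp Require Import all_classical all_reals all_analysis.
Set Implicit Arguments. Unset Strict Implicit. Unset Printing Implicit Defensive.
Import Order.TTheory GRing.Theory Num.Theory.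
Local Open Scope ring_scope.

Section Defs.
Variables (R : realType) (n : nat).

Definition row_stochastic (A : 'M[R]_n) : Prop :=
  (forall i j, 0 <= A i j) /\ (forall i, \sum_(j < n) A i j = 1).

Definition mx_graph (A : 'M[R]_n) : rel 'I_n := fun i j => 0 < A i j.

Definition irreducible_mx (A : 'M[R]_n) : Prop :=
  forall i j : 'I_n, connect (mx_graph A) i j.

(* a (simple, directed) cycle of the graph, given as the nonempty duplicate-free
   sequence of its vertices; its length is the number of vertices (= edges) *)
Definition graph_cycle (A : 'M[R]_n) (s : seq 'I_n) : bool :=
  [&& s != [::], uniq s & cycle (mx_graph A) s].

Definition aperiodic_mx (A : 'M[R]_n) : Prop :=
  forall d : nat,
    (forall s, graph_cycle A s -> (d %| size s)%N) -> d = 1%N.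

Definition zdiag (z : 'I_n -> R) : 'M[R]_n := diag_mx (\row_i z i).

Definition Wz (P : 'M[R]_n) (z : 'I_n -> R) : 'M[R]_n :=
  (1%:M - zdiag z) *m P + zdiag z.

Definition Sz (z : 'I_n -> R) : {set 'I_n} := [set i | z i == 1].

Definition gammaz (pi : 'cV[R]_n) (z : 'I_n -> R) : R :=
  \sum_(i < n) pi i 0 / (1 - z i).

Definition pz (pi : 'cV[R]_n) (z : 'I_n -> R) : 'cV[R]_n :=
  (gammaz pi z)^-1 *: (invmx (1%:M - zdiag z) *m pi).

Definition solves_system (P : 'M[R]_n) (z : 'I_n -> R) (H : 'M[R]_n) : Prop :=
  (forall i j, i \notin Sz z -> H i j = \sum_(k < n) P i k * H k j) /\
  (forall i j, i \in Sz z -> H i j = (i == j)%:R).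

End Defs.

From HB Require Import structures.
From mathcomp Require Import all_boot all_order all_algebra.
From mathcomp Require Import all_classical all_reals all_analysis.
From mathcomp Require Import ring lra zify.
Import Order.TTheory GRing.Theory Num.Theory.
Import numFieldNormedType.Exports.
Local Open Scope classical_set_scope.
Local Open Scope ring_scope.
Set Implicit Arguments. Unset Strict Implicit. Unset Printing Implicit Defensive.

(* W(z) is row-stochastic, and every edge of P leaving a vertex i with z_i < 1
   is an edge of W(z).
   If S(z) is empty, the graph of W(z) therefore contains that of P, so W(z)
   is primitive: some power W(z)^m is entrywise at least d > 0. Doeblin's
   contraction then shrinks the spread of every column of W(z)^t by 1 - d
   every m steps, so W(z)^t tends to a matrix with constant columns, i.e. to
   1 h' for a probability vector h. Since (I - [z]) p(z) is proportional to
   pi, p(z)' is a stochastic left fixed vector of W(z), whence h = p(z).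
   If S(z) is nonempty, its vertices are absorbing (their rows of W(z) are unit
   vectors) and, P being irreducible, every vertex reaches one of them within
   n steps. The mass W(z)^t puts outside S(z) thus decays geometrically,
   while the columns indexed by S(z) are nondecreasing; so W(z)^t converges.
   Its limit H satisfies W(z) H = H, which is the system of (ii). If H' is
   another solution, D = H' - H satisfies W(z) D = D and vanishes on the rows
   in S(z), so D = H D, and H D = 0 because H vanishes on the columns outside
   S(z). *)

Section RealSequences.
Variable R : realType.
Implicit Types (u e : nat -> R).

Lemma limn_in_itv u lo hi N : cvg (u @ \oo) ->
  (forall t, (N <= t)%N -> lo <= u t <= hi) -> lo <= limn u <= hi.
Proof.
move=> u_cvg u_itv; apply/andP; split.
  by apply: limr_ge => //; exists N => // t /u_itv /andP[].
by apply: limr_le => //; exists N => // t /u_itv /andP[].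
Qed.

Lemma cvg_common_limit (I : Type) (u : I -> nat -> R) e : e @ \oo --> 0 ->
  (forall q, exists lo hi N, hi - lo <= e q /\
     forall i t, (N <= t)%N -> lo <= u i t <= hi) ->
  (forall i, cvg (u i @ \oo)) /\ (forall i i', limn (u i) = limn (u i')).
Proof.
move=> e0 u_itv.
have u_cvg i : cvg (u i @ \oo).
  apply/cauchy_cvgP/cauchyP => eps eps_gt0.
  have [q _ /(_ q (leqnn q)) /= eq_lt] := (cvgr0Pnorm_lt e).1 e0 eps eps_gt0.
  have [lo [hi [N [width itv]]]] := u_itv q.
  exists lo, N => // t /(itv i) /andP[lo_u u_hi].
  rewrite /ball /= distrC ger0_norm ?subr_ge0 //.
  by apply: le_lt_trans (le_trans _ (ler_norm (e q))) eq_lt; lra.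
split=> // i i'; apply/eqP; rewrite -subr_eq0 -normr_le0.
have <- : limn e = 0 by exact: cvg_lim.
apply: limr_ge; first exact: cvgP e0.
exists 0%N => // q _; have [lo [hi [N [width itv]]]] := u_itv q.
have /andP[lo_i i_hi] := limn_in_itv (u_cvg i) (itv i).
have /andP[lo_i' i'_hi] := limn_in_itv (u_cvg i') (itv i').
by rewrite /= ler_norml; apply/andP; split; lra.
Qed.

Lemma cvg0_of_tail_bound u e : e @ \oo --> 0 ->
  (forall q, exists N, forall t, (N <= t)%N -> `|u t| <= e q) -> u @ \oo --> 0.
Proof.
move=> e0 u_bnd; apply/cvgr0Pnorm_lt => eps eps_gt0.
have [q _ /(_ q (leqnn q)) /= eq_lt] := (cvgr0Pnorm_lt e).1 e0 eps eps_gt0.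
have [N uN] := u_bnd q; exists N => // t /uN ut.
exact: le_lt_trans ut (le_lt_trans (ler_norm _) eq_lt).
Qed.

End RealSequences.

Lemma finite_pos_lower_bound (R : realType) (T : finType) (f : T -> R) :
  (forall x, 0 < f x) -> exists2 d, 0 < d & forall x, d <= f x.
Proof.
move=> f_gt0; exists (\big[Num.min/1]_x f x).
  by elim/big_ind: _ => // a b; rewrite lt_min => -> ->.
by move=> x; rewrite (bigD1 x) //= ge_min lexx.
Qed.

Section AdditiveSubmonoid.
Variable S : pred nat.
Hypothesis S0 : S 0%N.
Hypothesis SD : forall a b, S a -> S b -> S (a + b)%N.

Lemma submonoid_mull c a : S a -> S (c * a)%N.
Proof. by move=> Sa; elim: c => [|c IH]; rewrite ?mul0n // mulSn SD. Qed.

Lemma submonoid_gcd_gap (I : Type) (r : seq I) (Pr : pred I) (F : I -> nat) :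
  (forall i, Pr i -> S (F i)) ->
  exists x, S x /\ S (x + \big[gcdn/0%N]_(i <- r | Pr i) F i)%N.
Proof.
move=> SF; elim/big_rec: _ => [|i g Pi [x [Sx Sxg]]]; first by exists 0%N; rewrite addn0.
have [->|Fi_gt0] := posnP (F i); first by rewrite gcd0n; exists x.
have [a _ gcd_dvd] := Bezoutl g Fi_gt0.
exists (a * (x + g))%N; split; first exact: submonoid_mull.
have -> : (a * (x + g) + gcdn (F i) g = a * x + (gcdn (F i) g + a * g))%N by lia.
by rewrite -(divnK gcd_dvd) SD // submonoid_mull // SF.
Qed.

Lemma submonoid_ge_sqr x : S x -> S (x + 1)%N -> forall N, (x * x <= N)%N -> S N.
Proof.
move=> Sx Sx1 N le_xx_N.
have [x0|x_gt0] := posnP x.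
  by move: Sx1; rewrite x0 => S1; rewrite -(muln1 N) submonoid_mull.
have le_x_q : (x <= N %/ x)%N by rewrite leq_divRL.
have le_r_q : (N %% x <= N %/ x)%N by apply: leq_trans (ltnW (ltn_pmod _ _)) le_x_q.
have -> : N = ((N %/ x - N %% x) * x + N %% x * (x + 1))%N.
  by rewrite mulnBl mulnDr muln1 addnA subnK ?leq_mul // -divn_eq.
by rewrite SD // submonoid_mull.
Qed.

End AdditiveSubmonoid.

Section NonnegMatrices.
Variable R : numDomainType.

Lemma mulmx_ge0 m p q (A : 'M[R]_(m, p)) (B : 'M[R]_(p, q)) :
  (forall i j, 0 <= A i j) -> (forall i j, 0 <= B i j) ->
  forall i k, 0 <= (A *m B) i k.
Proof. by move=> A_ge0 B_ge0 i k; rewrite mxE sumr_ge0 // => j _; rewrite mulr_ge0. Qed.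

Lemma mulmx_ge_term m p q (A : 'M[R]_(m, p)) (B : 'M[R]_(p, q)) i j k :
  (forall i j, 0 <= A i j) -> (forall i j, 0 <= B i j) ->
  A i j * B j k <= (A *m B) i k.
Proof.
move=> A_ge0 B_ge0; rewrite mxE (bigD1 j) //= lerDl.
by rewrite sumr_ge0 // => l _; rewrite mulr_ge0.
Qed.

Lemma exp_mx_ge0 n (A : 'M[R]_n) t :
  (forall i j, 0 <= A i j) -> forall i j, 0 <= (A ^+ t) i j.
Proof.
move=> A_ge0; elim: t => [|t IH] i j; first by rewrite expr0 mxE ler0n.
by rewrite exprS -mulmxE mulmx_ge0.
Qed.

End NonnegMatrices.

Section RowStochastic.
Variables (R : realType) (n : nat).
Implicit Types (A B : 'M[R]_n) (v : 'I_n -> R).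

Lemma row_stochastic_mul A B :
  row_stochastic A -> row_stochastic B -> row_stochastic (A *m B).
Proof.
move=> [A_ge0 A_sum] [B_ge0 B_sum]; split; first exact: mulmx_ge0.
move=> i; under eq_bigr do rewrite mxE.
rewrite exchange_big /= -[RHS](A_sum i); apply: eq_bigr => k _.
by rewrite -mulr_sumr B_sum mulr1.
Qed.

Lemma row_stochastic1 : row_stochastic (1%:M : 'M[R]_n).
Proof.
split=> [i j|i]; first by rewrite mxE ler0n.
by rewrite (bigD1 i) //= big1 ?mxE ?eqxx ?addr0 // => j /negPf; rewrite mxE eq_sym => ->.
Qed.

Lemma row_stochastic_exp A t : row_stochastic A -> row_stochastic (A ^+ t).
Proof.
move=> A_st; elim: t => [|t IH]; first by rewrite expr0; exact: row_stochastic1.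
by rewrite exprS -mulmxE; exact: row_stochastic_mul.
Qed.

Lemma row_stochastic_le1 A i j : row_stochastic A -> A i j <= 1.
Proof. by move=> [A_ge0 A_sum]; rewrite -(A_sum i) (bigD1 j) //= lerDl sumr_ge0. Qed.

Lemma row_stochastic_avg A v lo hi i : row_stochastic A ->
  (forall k, lo <= v k <= hi) -> lo <= \sum_k A i k * v k <= hi.
Proof.
move=> [A_ge0 A_sum] v_itv; apply/andP; split.
  rewrite -[lo]mul1r -(A_sum i) mulr_suml; apply: ler_sum => k _.
  by rewrite ler_wpM2l //; case/andP: (v_itv k).
rewrite -[hi]mul1r -(A_sum i) mulr_suml; apply: ler_sum => k _.
by rewrite ler_wpM2l //; case/andP: (v_itv k).
Qed.

(* Doeblin: every row puts weight at least [d] on the same value [v j0], so the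
   averages of [v] lie in an interval of width [(1 - d) (hi - lo)]. *)
Lemma row_stochastic_contraction A d v lo hi j0 i : row_stochastic A ->
  (forall i j, d <= A i j) -> (forall k, lo <= v k <= hi) ->
  (1 - d) * lo + d * v j0 <= \sum_k A i k * v k <= d * v j0 + (1 - d) * hi.
Proof.
move=> [A_ge0 A_sum] A_ge_d v_itv.
have sum_rest := A_sum i; rewrite (bigD1 j0) //= in sum_rest.
rewrite (bigD1 j0) //=; set rest := \sum_(k | k != j0) A i k in sum_rest.
have rest_le : \sum_(k | k != j0) A i k * v k <= rest * hi.
  rewrite mulr_suml; apply: ler_sum => k _.
  by rewrite ler_wpM2l //; case/andP: (v_itv k).
have rest_ge : rest * lo <= \sum_(k | k != j0) A i k * v k.
  rewrite mulr_suml; apply: ler_sum => k _.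
  by rewrite ler_wpM2l //; case/andP: (v_itv k).
have /andP[lo_v v_hi] := v_itv j0.
have d_le := A_ge_d i j0.
have e1 : 0 <= (A i j0 - d) * (hi - v j0) by rewrite mulr_ge0 // subr_ge0.
have e2 : 0 <= (A i j0 - d) * (v j0 - lo) by rewrite mulr_ge0 // subr_ge0.
apply/andP; split; nra.
Qed.

End RowStochastic.

Section Walks.
Variables (R : realType) (n : nat) (A : 'M[R]_n).
Hypothesis A_ge0 : forall i j, 0 <= A i j.

Definition walk l i j := 0 < (A ^+ l) i j.

Lemma walk0 i : walk 0 i i.
Proof. by rewrite /walk expr0 mxE eqxx ltr01. Qed.

Lemma walkD a b i j k : walk a i j -> walk b j k -> walk (a + b) i k.
Proof.
rewrite /walk exprD -mulmxE => Aij Ajk; apply: lt_le_trans (mulr_gt0 Aij Ajk) _.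
by apply: mulmx_ge_term; exact: exp_mx_ge0.
Qed.

Lemma walk_path x p : path (mx_graph A) x p -> walk (size p) x (last x p).
Proof.
elim: p x => [|y p IH] x /=; first by move=> _; exact: walk0.
by move=> /andP[Axy /IH]; rewrite -add1n; apply: walkD; rewrite /walk expr1.
Qed.

Lemma uniq_size_ord (s : seq 'I_n) : uniq s -> (size s <= n)%N.
Proof.
move=> s_uniq; rewrite -(card_uniqP s_uniq).
by apply: leq_trans (max_card _) _; rewrite card_ord.
Qed.

Lemma walk_connect x y :
  connect (mx_graph A) x y -> exists2 l, (l < n)%N & walk l x y.
Proof.
move=> /connectP[p /shortenP[p' p'_path p'_uniq _] ->].
by exists (size p'); [exact: uniq_size_ord p'_uniq | exact: walk_path].
Qed.

(* The return times to a vertex [v] form an additive submonoid of nat. Every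
   cycle length is the difference of two return times at most [3 n], so these
   have gcd 1, and then every large enough time is a return time. *)
Lemma primitive_mx : irreducible_mx A -> aperiodic_mx A ->
  exists m, forall i j, walk m i j.
Proof.
move=> irr aper; have [v _|n0] := pickP (@predT 'I_n); last first.
  by exists 0%N => i; have := n0 i.
pose ret l := walk l v v.
have retD a b : ret a -> ret b -> ret (a + b)%N by exact: walkD.
pose g := \big[gcdn/0%N]_(l < (3 * n).+1 | ret l) (l : nat).
have g_dvd l : (l <= 3 * n)%N -> ret l -> (g %| l)%N.
  move=> le_l ret_l; rewrite /g (bigD1 (Ordinal (le_l : (l < (3 * n).+1)%N))) //.
  exact: dvdn_gcdl.
have g1 : g = 1%N.
  apply: aper => -[//|u p] /and3P[_ cyc_uniq cyc].
  have ret_u : walk (size (u :: p)) u u.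
    by move: cyc => /= /walk_path; rewrite size_rcons last_rcons.
  have le_cyc : (size (u :: p) <= n)%N := uniq_size_ord cyc_uniq.
  have [a lt_a walk_a] := walk_connect (irr v u).
  have [b lt_b walk_b] := walk_connect (irr u v).
  have g_ab : (g %| a + b)%N by apply: g_dvd; [lia | exact: walkD walk_a walk_b].
  have : (g %| a + (size (u :: p) + b))%N.
    by apply: g_dvd; [lia | exact: walkD walk_a (walkD ret_u walk_b)].
  by rewrite addnCA dvdn_addl.
have [x [ret_x ret_x1]] := submonoid_gcd_gap (walk0 v) retD (index_enum _)
  (fun (l : 'I_(3 * n).+1) (ret_l : ret l) => ret_l).
rewrite -/g g1 in ret_x1.
exists (n + x * x + n)%N => i j.
have [a lt_a walk_a] := walk_connect (irr i v).
have [b lt_b walk_b] := walk_connect (irr v j).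
have ret_mid : ret (n + x * x + n - a - b)%N.
  by apply: (submonoid_ge_sqr (S := ret) (walk0 v) retD ret_x ret_x1); lia.
have -> : (n + x * x + n = a + ((n + x * x + n - a - b) + b))%N by lia.
exact: walkD walk_a (walkD ret_mid walk_b).
Qed.

End Walks.

Section GraphInclusion.
Variables (R : realType) (n : nat) (A B : 'M[R]_n).
Hypothesis AB : subrel (mx_graph A) (mx_graph B).

Lemma irreducible_mx_sub : irreducible_mx A -> irreducible_mx B.
Proof. by move=> irr i j; apply: connect_sub (irr i j) => x y /AB /connect1. Qed.

Lemma aperiodic_mx_sub : aperiodic_mx A -> aperiodic_mx B.
Proof.
move=> aper d d_dvd; apply: aper => s /and3P[s_nil s_uniq s_cyc]; apply: d_dvd.
by rewrite /graph_cycle s_nil s_uniq (sub_cycle AB s_cyc).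
Qed.

End GraphInclusion.

Section EntrywiseLimits.
Variable R : realType.

Definition mx_lim m p (A : nat -> 'M[R]_(m, p)) (H : 'M[R]_(m, p)) :=
  forall i j, (fun t => A t i j) @ \oo --> H i j.

Lemma mx_lim_limn m p (A : nat -> 'M[R]_(m, p)) :
  (forall i j, cvg ((fun t => A t i j) @ \oo)) ->
  mx_lim A (\matrix_(i, j) limn (fun t => A t i j)).
Proof. by move=> A_cvg i j; rewrite mxE; exact: A_cvg. Qed.

Lemma mx_lim_unique m p (A : nat -> 'M[R]_(m, p)) H H' :
  mx_lim A H -> mx_lim A H' -> H = H'.
Proof.
move=> AH AH'; apply/matrixP => i j.
exact: cvg_unique _ (AH i j) (AH' i j).
Qed.

Lemma mx_lim_cst m p (B : 'M[R]_(m, p)) : mx_lim (fun=> B) B.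
Proof. by move=> i j; exact: cvg_cst. Qed.

Lemma mx_lim_mull m p q (B : 'M[R]_(q, m)) (A : nat -> 'M[R]_(m, p)) H :
  mx_lim A H -> mx_lim (fun t => B *m A t) (B *m H).
Proof.
move=> AH i j; rewrite mxE; under eq_fun do rewrite mxE.
by apply: cvg_big => [|k _]; [exact: add_continuous | exact: cvgMl_tmp].
Qed.

Lemma mx_lim_mulr m p q (B : 'M[R]_(p, q)) (A : nat -> 'M[R]_(m, p)) H :
  mx_lim A H -> mx_lim (fun t => A t *m B) (H *m B).
Proof.
move=> AH i j; rewrite mxE; under eq_fun do rewrite mxE.
by apply: cvg_big => [|k _]; [exact: add_continuous | exact: cvgMr_tmp].
Qed.

Lemma mx_lim_row_stochastic n (A : nat -> 'M[R]_n) H :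
  (forall t, row_stochastic (A t)) -> mx_lim A H -> row_stochastic H.
Proof.
move=> A_st AH; split=> [i j|i].
  have A_itv t : (0 <= t)%N -> 0 <= A t i j <= 1.
    by move=> _; rewrite (A_st t).1 row_stochastic_le1.
  by have /andP[] := limn_in_itv (cvgP _ (AH i j)) A_itv; rewrite (cvg_lim _ (AH i j)).
have sum_cvg : (fun t => \sum_j A t i j) @ \oo --> \sum_j H i j.
  by apply: cvg_big => [|j _]; [exact: add_continuous | exact: AH].
have sum1 : (fun t => \sum_j A t i j) = fun=> 1 by apply/funext => t; exact: (A_st t).2.
by rewrite sum1 in sum_cvg; exact: cvg_unique _ sum_cvg (cvg_cst _).
Qed.

Section Powers.
Variables (n : nat) (W H : 'M[R]_n).
Hypothesis WtoH : mx_lim (fun t => W ^+ t) H.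

Lemma mx_lim_exp_fix : W *m H = H.
Proof.
apply: (mx_lim_unique (mx_lim_mull (B := W) WtoH)) => i j.
have -> : (fun t => (W *m W ^+ t) i j) = [sequence (W ^+ t.+1) i j]_t.
  by apply/funext => t; rewrite /= exprS mulmxE.
by rewrite (cvg_shiftS (fun t => (W ^+ t) i j)); exact: WtoH.
Qed.

Lemma mx_lim_exp_fixl m (x : 'M[R]_(m, n)) : x *m W = x -> x *m H = x.
Proof.
move=> xW; have xWt t : x *m W ^+ t = x.
  by elim: t => [|t IH]; rewrite ?expr0 ?mulmx1 // exprSr -mulmxE mulmxA IH.
apply: (mx_lim_unique (mx_lim_mull (B := x) WtoH)).
by under eq_fun do rewrite xWt; exact: mx_lim_cst.
Qed.

Lemma mx_lim_exp_fixr m (D : 'M[R]_(n, m)) : W *m D = D -> H *m D = D.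
Proof.
move=> WD; have WtD t : W ^+ t *m D = D.
  by elim: t => [|t IH]; rewrite ?expr0 ?mul1mx // exprS -mulmxE -mulmxA IH.
apply: (mx_lim_unique (mx_lim_mulr (B := D) WtoH)).
by under eq_fun do rewrite WtD; exact: mx_lim_cst.
Qed.

End Powers.
End EntrywiseLimits.

Lemma const_cols_rank_one (R : pzRingType) n (H : 'M[R]_n) (x : 'rV[R]_n) :
  (forall i i' j, H i j = H i' j) -> x *m H = x -> \sum_k x 0 k = 1 ->
  H = const_mx 1 *m x.
Proof.
move=> H_cols xH x_sum; apply/matrixP => i j.
rewrite mxE big_ord1 !mxE mul1r -xH mxE.
under eq_bigr do rewrite (H_cols _ i).
by rewrite -mulr_suml x_sum mul1r.
Qed.

Section Wz.
Variables (R : realType) (n : nat) (P : 'M[R]_n) (z : 'I_n -> R).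
Local Notation W := (Wz P z).
Local Notation S := (Sz z).

Lemma one_sub_zdiag : 1%:M - zdiag z = zdiag (fun i => 1 - z i).
Proof.
by apply/matrixP => i j; rewrite !mxE; case: (i == j); rewrite ?mulr1n ?mulr0n ?subr0.
Qed.

Lemma Wz_mulmx_entry m (M : 'M[R]_(n, m)) i j :
  (W *m M) i j = (1 - z i) * (P *m M) i j + z i * M i j.
Proof. by rewrite /Wz one_sub_zdiag mulmxDl -mulmxA !mul_diag_mx !mxE. Qed.

Lemma Wz_entry i j : W i j = (1 - z i) * P i j + z i * (i == j)%:R.
Proof. by rewrite -[W]mulmx1 Wz_mulmx_entry mulmx1 mxE. Qed.

Lemma Wz_absorbing s k : s \in S -> W s k = (s == k)%:R.
Proof. by rewrite inE Wz_entry => /eqP ->; rewrite subrr mul0r add0r mul1r. Qed.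

Lemma Wz_exp_absorbing s t k : s \in S -> (W ^+ t) s k = (s == k)%:R.
Proof.
move=> sS; elim: t k => [|t IH] k; first by rewrite expr0 mxE.
rewrite exprS -mulmxE mxE (bigD1 s) //= Wz_absorbing // eqxx mul1r IH big1 ?addr0 //.
by move=> l /negPf; rewrite Wz_absorbing // eq_sym => ->; rewrite mul0r.
Qed.

Lemma mx_lim_absorbing H s k :
  mx_lim (fun t => W ^+ t) H -> s \in S -> H s k = (s == k)%:R.
Proof.
move=> WtoH sS; have := WtoH s k.
have -> : (fun t => (W ^+ t) s k) = fun=> (s == k)%:R.
  by apply/funext => t; exact: Wz_exp_absorbing.
by move=> /(cvg_unique _ (cvg_cst _)) ->.
Qed.

Lemma solves_systemP H : solves_system P z H <->
  W *m H = H /\ forall i j, i \in S -> H i j = (i == j)%:R.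
Proof.
split=> [[H_inner H_S]|[WH H_S]].
  split=> //; apply/matrixP => i j; rewrite Wz_mulmx_entry.
  have [iS|iS] := boolP (i \in S); first by move: iS; rewrite inE => /eqP ->; ring.
  by rewrite mxE -H_inner //; ring.
split=> // i j iS.
have zi_neq1 : 1 - z i != 0 by move: iS; rewrite inE subr_eq0 eq_sym.
have /matrixP/(_ i j)/eqP := WH; rewrite Wz_mulmx_entry mxE -subr_eq0.
have -> : (1 - z i) * (\sum_k P i k * H k j) + z i * H i j - H i j
        = (1 - z i) * (\sum_k P i k * H k j - H i j) by ring.
by rewrite mulf_eq0 (negPf zi_neq1) subr_eq0 => /eqP ->.
Qed.

Lemma Wz_harmonic_eq0 m H (D : 'M[R]_(n, m)) : mx_lim (fun t => W ^+ t) H ->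
  (forall i k, k \notin S -> H i k = 0) ->
  W *m D = D -> (forall k j, k \in S -> D k j = 0) -> D = 0.
Proof.
move=> WtoH H_transient WD D_S; rewrite -(mx_lim_exp_fixr WtoH WD).
apply/matrixP => i j; rewrite !mxE big1 // => k _.
by have [kS|kS] := boolP (k \in S); [rewrite D_S ?mulr0 | rewrite H_transient ?mul0r].
Qed.

Hypotheses (P_st : row_stochastic P) (z01 : forall i, 0 <= z i <= 1).

Lemma Wz_row_stochastic : row_stochastic W.
Proof.
have [P_ge0 P_sum] := P_st; split=> [i j|i].
  have /andP[z_ge0 z_le1] := z01 i.
  by rewrite Wz_entry addr_ge0 ?mulr_ge0 ?ler0n ?subr_ge0.
under eq_bigr do rewrite Wz_entry.
rewrite big_split -!mulr_sumr /= P_sum (bigD1 i) //= eqxx big1 ?addr0.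
  by rewrite mulr1 mulr1 subrK.
by move=> j /negPf; rewrite eq_sym => ->.
Qed.

Lemma Wz_exp_ge0 t i j : 0 <= (W ^+ t) i j.
Proof. exact: (row_stochastic_exp t Wz_row_stochastic).1. Qed.

Lemma mx_graph_Wz i j : z i < 1 -> mx_graph P i j -> mx_graph W i j.
Proof.
rewrite /mx_graph Wz_entry -subr_gt0 => z_lt1 Pij.
have /andP[z_ge0 _] := z01 i.
by rewrite ltr_pwDl ?mulr_gt0 ?mulr_ge0 ?ler0n.
Qed.

Lemma Sz_eq0_lt1 : S = finset.set0 -> forall i, z i < 1.
Proof.
move=> S0 i; have /andP[_ z_le1] := z01 i; rewrite lt_neqAle z_le1 andbT.
apply/negP => /eqP zi1; have iS : i \in S by rewrite inE zi1.
by rewrite S0 inE in iS.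
Qed.

End Wz.

Section Ergodic.
Variables (R : realType) (n : nat) (P : 'M[R]_n) (z : 'I_n -> R).
Hypotheses (P_st : row_stochastic P) (P_irr : irreducible_mx P).
Hypothesis P_aper : aperiodic_mx P.
Hypotheses (z01 : forall i, 0 <= z i <= 1) (z_lt1 : forall i, z i < 1).
Local Notation W := (Wz P z).

Lemma Wz_primitive : exists m, forall i j, 0 < (W ^+ m) i j.
Proof.
have PW : subrel (mx_graph P) (mx_graph W) by move=> i j; exact: mx_graph_Wz.
apply: primitive_mx; first exact: (Wz_row_stochastic P_st z01).1.
  exact: irreducible_mx_sub PW P_irr.
exact: aperiodic_mx_sub PW P_aper.
Qed.

Lemma Wz_exp_lim_const_cols :
  exists H, mx_lim (fun t => W ^+ t) H /\ forall i i' j, H i j = H i' j.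
Proof.
have W_st := Wz_row_stochastic P_st z01.
have [m Wm_gt0] := Wz_primitive.
have [d d_gt0 d_le] := finite_pos_lower_bound (fun ij : 'I_n * 'I_n => Wm_gt0 ij.1 ij.2).
have col_lim j : (forall i, cvg ((fun t => (W ^+ t) i j) @ \oo)) /\
    forall i i', limn (fun t => (W ^+ t) i j) = limn (fun t => (W ^+ t) i' j).
  have d_le1 : d <= 1.
    exact: le_trans (d_le (j, j)) (row_stochastic_le1 j j (row_stochastic_exp m W_st)).
  have c_lt1 : `|1 - d| < 1 by rewrite ger0_norm; lra.
  apply: (@cvg_common_limit _ _ (fun i t => (W ^+ t) i j) _ (cvg_expr c_lt1)) => q.
  have itv : exists lo hi, hi - lo <= (1 - d) ^+ q /\
      forall i, lo <= (W ^+ (q * m)) i j <= hi.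
    elim: q => [|q [lo [hi [width itv]]]].
      exists 0, 1; split=> [|i]; first by rewrite expr0 subr0.
      by rewrite Wz_exp_ge0 // row_stochastic_le1 //; exact: row_stochastic_exp.
    pose x := (W ^+ (q * m)) j j.
    exists ((1 - d) * lo + d * x), (d * x + (1 - d) * hi); split.
      have -> : d * x + (1 - d) * hi - ((1 - d) * lo + d * x) = (1 - d) * (hi - lo).
        by ring.
      by rewrite exprS ler_wpM2l // subr_ge0.
    move=> i; rewrite mulSn exprD -mulmxE mxE.
    apply: row_stochastic_contraction itv; first exact: row_stochastic_exp.
    by move=> a b; exact: d_le (a, b).
  have [lo [hi [width itv_q]]] := itv.
  exists lo, hi, (q * m)%N; split=> // i t le_t.
  rewrite -(subnK le_t) exprD -mulmxE mxE.
  by apply: row_stochastic_avg itv_q; exact: row_stochastic_exp.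
exists (\matrix_(i, j) limn (fun t => (W ^+ t) i j)); split.
  by apply: mx_lim_limn => i j; exact: (col_lim j).1.
by move=> i i' j; rewrite !mxE; exact: (col_lim j).2.
Qed.

End Ergodic.

Section Centrality.
Variables (R : realType) (n : nat) (P : 'M[R]_n) (pi : 'cV[R]_n) (z : 'I_n -> R).
Local Notation W := (Wz P z).

Lemma Wz_fixed_left (u : 'cV[R]_n) :
  P^T *m ((1%:M - zdiag z) *m u) = (1%:M - zdiag z) *m u -> u^T *m W = u^T.
Proof.
rewrite /Wz one_sub_zdiag; set D := zdiag _ => Du_inv.
have uD : u^T *m D = (D *m u)^T by rewrite trmx_mul tr_diag_mx.
have DuP : (D *m u)^T *m P = (D *m u)^T by rewrite -{2}Du_inv [RHS]trmx_mul trmxK.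
by rewrite mulmxDr mulmxA uD DuP -uD -mulmxDr /D -one_sub_zdiag subrK mulmx1.
Qed.

Hypotheses (pi_inv : P^T *m pi = pi) (pi_ge0 : forall i, 0 <= pi i 0).
Hypotheses (pi_sum : \sum_i pi i 0 = 1) (z01 : forall i, 0 <= z i <= 1).
Hypothesis z_lt1 : forall i, z i < 1.

Lemma one_sub_zdiag_unit : 1%:M - zdiag z \in unitmx.
Proof.
rewrite one_sub_zdiag unitmxE det_diag unitfE gt_eqF // prodr_gt0 // => i _.
by rewrite mxE subr_gt0.
Qed.

Lemma pz_entry i : pz pi z i 0 = (gammaz pi z)^-1 * (pi i 0 / (1 - z i)).
Proof.
rewrite /pz mxE; set u := invmx _ *m pi.
have /matrixP/(_ i 0) : (1%:M - zdiag z) *m u = pi.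
  exact: mulKVmx one_sub_zdiag_unit pi.
rewrite one_sub_zdiag mul_diag_mx !mxE => <-.
by rewrite mulrAC mulfV ?mul1r // subr_eq0 eq_sym lt_eqF.
Qed.

Lemma gammaz_ge1 : 1 <= gammaz pi z.
Proof.
rewrite -pi_sum; apply: ler_sum => i _; have /andP[z_ge0 _] := z01 i.
by rewrite ler_pdivlMr ?subr_gt0 // mulrBr mulr1 gerBl mulr_ge0.
Qed.

Lemma pz_sum : \sum_i pz pi z i 0 = 1.
Proof.
under eq_bigr do rewrite pz_entry.
by rewrite -mulr_sumr mulVf // lt0r_neq0 // (lt_le_trans ltr01 gammaz_ge1).
Qed.

Lemma pz_Wz_fixed : (pz pi z)^T *m W = (pz pi z)^T.
Proof.
rewrite /pz linearZ /= -scalemxAl Wz_fixed_left // mulKVmx //.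
exact: one_sub_zdiag_unit.
Qed.

End Centrality.

Section Absorbing.
Variables (R : realType) (n : nat) (P : 'M[R]_n) (z : 'I_n -> R).
Hypotheses (P_st : row_stochastic P) (P_irr : irreducible_mx P).
Hypothesis z01 : forall i, 0 <= z i <= 1.
Variable s0 : 'I_n.
Hypothesis s0S : s0 \in Sz z.
Local Notation W := (Wz P z).
Local Notation S := (Sz z).

Lemma connect_Wz_absorbing i : exists2 s, s \in S & connect (mx_graph W) i s.
Proof.
have /connectP[p p_path s0_last] := P_irr i s0.
elim: p i p_path s0_last => [|y p IH] i /=; first by move=> _ <-; exists s0.
move=> /andP[Piy y_path] s0_last.
have [iS|iS] := boolP (i \in S); first by exists i => //; exact: connect0.
have [s sS ys] := IH y y_path s0_last.
exists s => //; apply: connect_trans ys; apply: connect1; apply: mx_graph_Wz Piy => //.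
by move: iS; rewrite inE lt_neqAle => ->; case/andP: (z01 i).
Qed.

Lemma Wz_exp_absorbed_gt0 i : 0 < \sum_(s in S) (W ^+ n) i s.
Proof.
have W_ge0 := (Wz_row_stochastic P_st z01).1.
have [s sS /(walk_connect W_ge0)[l lt_l walk_l]] := connect_Wz_absorbing i.
have walk_s : walk W (n - l) s s by rewrite /walk Wz_exp_absorbing // eqxx ltr01.
have := walkD W_ge0 walk_l walk_s; rewrite subnKC => [walk_n|]; last exact: ltnW.
rewrite (bigD1 s) //=; apply: lt_le_trans walk_n _.
by rewrite lerDl sumr_ge0 // => k _; exact: Wz_exp_ge0.
Qed.

Definition transient_mass t i := \sum_(j | j \notin S) (W ^+ t) i j.

Lemma transient_mass_itv t i : 0 <= transient_mass t i <= 1.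
Proof.
have [Wt_ge0 Wt_sum] := row_stochastic_exp t (Wz_row_stochastic P_st z01).
rewrite /transient_mass sumr_ge0 //= -(Wt_sum i) big_mkcond /=.
by apply: ler_sum => j _; case: ifP.
Qed.

Lemma transient_mass_absorbing t s : s \in S -> transient_mass t s = 0.
Proof.
move=> sS; apply: big1 => j jS; rewrite Wz_exp_absorbing //.
by case: eqP jS => // <-; rewrite sS.
Qed.

Lemma transient_mass_exprD t u i :
  transient_mass (t + u) i = \sum_k (W ^+ t) i k * transient_mass u k.
Proof.
rewrite /transient_mass; under eq_bigr do rewrite exprD -mulmxE mxE.
by rewrite exchange_big /=; apply: eq_bigr => k _; rewrite mulr_sumr.
Qed.

(* From every vertex, the absorbed mass after [n] steps is at least some
   [d > 0]; hence [c = 1 - d]. *)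
Lemma transient_mass_decay : exists2 c, 0 <= c < 1 &
  forall q t i, (q * n <= t)%N -> transient_mass t i <= c ^+ q.
Proof.
have [d d_gt0 d_le] := finite_pos_lower_bound Wz_exp_absorbed_gt0.
have tm_n i : transient_mass n i <= 1 - d.
  have [_ Wn_sum] := row_stochastic_exp n (Wz_row_stochastic P_st z01).
  have := Wn_sum i; rewrite (bigID (mem S)) /= => sum1.
  by have := d_le i; rewrite /transient_mass; lra.
have d_le1 : d <= 1.
  by have := tm_n s0; case/andP: (transient_mass_itv n s0) => *; lra.
exists (1 - d); first by apply/andP; split; lra.
elim=> [|q IH] t i le_t; first by rewrite expr0; case/andP: (transient_mass_itv t i).
have -> : t = (n + (t - n))%N by move: le_t; rewrite mulSn; lia.
rewrite transient_mass_exprD (bigID (mem S)) /= big1 ?add0r => [|k kS]; last first.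
  by rewrite transient_mass_absorbing ?mulr0.
apply: (@le_trans _ _ (transient_mass n i * (1 - d) ^+ q)).
  rewrite [transient_mass n i]/transient_mass mulr_suml; apply: ler_sum => k _.
  by rewrite ler_wpM2l ?Wz_exp_ge0 ?IH //; move: le_t; rewrite mulSn; lia.
by rewrite exprS; apply: ler_wpM2r; [rewrite exprn_ge0 // subr_ge0 | exact: tm_n].
Qed.

Lemma Wz_exp_lim_absorbing :
  exists H, mx_lim (fun t => W ^+ t) H /\ forall i k, k \notin S -> H i k = 0.
Proof.
have W_st := Wz_row_stochastic P_st z01.
have [c /andP[c_ge0 c_lt1] decay] := transient_mass_decay.
have transient_cvg0 i k : k \notin S -> (fun t => (W ^+ t) i k) @ \oo --> 0.
  move=> kS; have c_norm_lt1 : `|c| < 1 by rewrite ger0_norm.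
  apply: (cvg0_of_tail_bound (cvg_expr c_norm_lt1)) => q.
  exists (q * n)%N => t /(decay q t i); apply: le_trans.
  rewrite ger0_norm ?Wz_exp_ge0 // /transient_mass (bigD1 k) //= lerDl.
  by rewrite sumr_ge0 // => j _; exact: Wz_exp_ge0.
have Wt_cvg i k : cvg ((fun t => (W ^+ t) i k) @ \oo).
  have [kS|kS] := boolP (k \in S); last exact: cvgP (transient_cvg0 i k kS).
  apply: nondecreasing_is_cvgn.
    apply/nondecreasing_seqP => t; rewrite exprSr -mulmxE.
    apply: le_trans (mulmx_ge_term i k k (row_stochastic_exp t W_st).1 W_st.1).
    by rewrite Wz_absorbing // eqxx mulr1.
  by exists 1 => _ [t _ <-]; apply: row_stochastic_le1; exact: row_stochastic_exp.
exists (\matrix_(i, k) limn (fun t => (W ^+ t) i k)); split; first exact: mx_lim_limn.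
by move=> i k kS; rewrite mxE; exact: cvg_lim _ (transient_cvg0 i k kS).
Qed.

End Absorbing.

Unset Implicit Arguments.

Theorem lemma1 (R : realType) (n : nat) (P : 'M[R]_n) (pi : 'cV[R]_n)
  (hP : row_stochastic P) (hirr : irreducible_mx P) (hap : aperiodic_mx P)
  (hpi_nn : forall i, 0 <= pi i 0) (hpi_sum : \sum_(i < n) pi i 0 = 1)
  (hpi_inv : P^T *m pi = pi)
  (z : 'I_n -> R) (hz : forall i, 0 <= z i <= 1) :
  exists H : 'M[R]_n,
    (forall i j, (fun t : nat => ((Wz P z) ^+ t) i j) @ \oo --> H i j) /\
    row_stochastic H /\
    (Sz z = finset.set0 -> H = const_mx 1 *m (pz pi z)^T) /\
    (Sz z != finset.set0 ->
       solves_system P z H /\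
       (forall H' : 'M[R]_n, solves_system P z H' -> H' = H)).
Proof.
have lim_st H : mx_lim (fun t => Wz P z ^+ t) H -> row_stochastic H.
  apply: mx_lim_row_stochastic => t.
  exact: row_stochastic_exp (Wz_row_stochastic hP hz).
have [S0|/finset.set0Pn[s0 s0S]] := eqVneq (Sz z) finset.set0.
  have z_lt1 := Sz_eq0_lt1 hz S0.
  have [H [WtoH H_cols]] := Wz_exp_lim_const_cols hP hirr hap hz z_lt1.
  exists H; split=> //; split; first exact: lim_st.
  split=> // _.
  apply: const_cols_rank_one H_cols _ _.
    exact: (mx_lim_exp_fixl WtoH (pz_Wz_fixed hpi_inv z_lt1)).
  by under eq_bigr do rewrite mxE; exact: pz_sum hpi_nn hpi_sum hz z_lt1.
have [H [WtoH H_transient]] := Wz_exp_lim_absorbing hP hirr hz s0S.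
have H_S i j : i \in Sz z -> H i j = (i == j)%:R by exact: mx_lim_absorbing.
exists H; split=> //; split; first exact: lim_st.
split=> [S0|_]; first by rewrite S0 inE in s0S.
split=> [|H' /solves_systemP[WH' H'_S]].
  by apply/solves_systemP; split; [exact: mx_lim_exp_fix | exact: H_S].
apply/eqP; rewrite -subr_eq0; apply/eqP/(Wz_harmonic_eq0 WtoH H_transient).
  by rewrite mulmxBr WH' (mx_lim_exp_fix WtoH).
by move=> k j kS; rewrite !mxE H'_S // H_S // subrr.
Qed.
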